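(* Let $G=(V,E)$ be a claw-free graph and $I$ a maximum cardinality independent set of $G$. Let $a\in I$ and let $v\in V_a$ be a vertex belonging to a cluster $C$. Then $N[v]\setminus N[a]=C\setminus V_a$.
   Context: Graphs are finite, simple, undirected; claw-free means no induced $K_{1,3}$. For $a\ne b$ in $I$, $V_{a,b}=\{v\in V\setminus I: N(v)\cap I=\{a,b\}\}$ ($2$-packs), and for $a\in I$, $V_a=\{v\in V\setminus I : N(v)\cap I=\{a\}\}$ ($1$-packs). $\mathtt{T2}^a$ is the set of vertices $v\in V_a$ that have neighbours in at least two distinct $1$-packs other than $V_a$; $\mathtt{T2}=\bigcup_{a\in I}\mathtt{T2}^a$. $G_{\mathtt{T2}}$ is the graph on vertex set $\mathtt{T2}$ whose edges are the edges of $G[\mathtt{T2}]$ with endpoints in different $1$-packs. A cluster is the vertex set of a connected component of $G_{\mathtt{T2}}$. *)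

(* Simple graph = symmetric irreflexive relation on a finType. *)
From mathcomp Require Import all_boot.
Set Implicit Arguments. Unset Strict Implicit. Unset Printing Implicit Defensive.

Section Defs.
Variables (T : finType) (e : rel T).

Definition nbhd (v : T) : {set T} := [set u | e v u].
Definition cnbhd (v : T) : {set T} := v |: nbhd v.

Definition independent (I : {set T}) : Prop :=
  forall x y, x \in I -> y \in I -> ~~ e x y.

Definition max_independent (I : {set T}) : Prop :=
  independent I /\ forall J : {set T}, independent J -> #|J| <= #|I|.

Definition claw_free : Prop :=
  forall x y1 y2 y3 : T, e x y1 -> e x y2 -> e x y3 ->
    y1 != y2 -> y1 != y3 -> y2 != y3 ->
    [|| e y1 y2, e y1 y3 | e y2 y3].

Variable I : {set T}.

Definition pack1 (a : T) : {set T} :=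
  [set v in ~: I | nbhd v :&: I == [set a]].

Definition T2a (a : T) : {set T} :=
  [set v in pack1 a | [exists b in I, exists c in I,
     [&& b != c, b != a, c != a,
         [exists u in pack1 b, e v u] & [exists u in pack1 c, e v u]]]].

Definition T2 : {set T} := \bigcup_(a in I) T2a a.

Definition T2rel : rel T := fun x y =>
  [&& x \in T2, y \in T2, e x y &
      ~~ [exists a in I, (x \in pack1 a) && (y \in pack1 a)]].

Definition cluster (C : {set T}) : Prop :=
  exists2 x, x \in T2 & C = [set y in T2 | connect T2rel x y].

End Defs.

From mathcomp Require Import all_boot.

Set Implicit Arguments.
Unset Strict Implicit.
Unset Printing Implicit Defensive.

(* Write K p for N(p) \ N[a].  For p in V_a every vertex of K p lies in a
   1-pack V_b with b <> a (maximality of I gives it a neighbour in I, and a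
   claw centred at it forbids a second one), and K p is a clique (a claw
   centred at p with leaf a).  Claw-freeness then shows that whenever p is in
   T2, q is in V_a and some w in K p is adjacent to q, K p is contained in
   K q.  Hence the vertices z of V_a with K z = K v, together with K v, form
   a set closed under the edges of G_T2 containing v; since K v also lies in
   the cluster of v, that cluster minus V_a is exactly K v. *)

Section Cluster.

Variables (T : finType) (e : rel T).
Hypotheses (e_sym : symmetric e) (e_irr : irreflexive e) (e_cf : claw_free e).
Variable I : {set T}.
Hypothesis I_max : max_independent e I.

Local Notation pack1 := (pack1 e I).
Local Notation T2 := (T2 e I).
Local Notation T2rel := (T2rel e I).

Lemma notin_in_neq x y : x \notin I -> y \in I -> x != y.
Proof. by move=> xI yI; apply: contraNneq xI => ->. Qed.

Lemma pack1_notin x b : x \in pack1 b -> x \notin I.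
Proof. by rewrite inE in_setC => /andP[]. Qed.

Lemma pack1_adjE x b c : x \in pack1 b -> c \in I -> e x c = (c == b).
Proof.
rewrite inE => /andP[_ /eqP Nx] cI.
by have := congr1 (fun S : {set T} => c \in S) Nx; rewrite /= !inE cI andbT.
Qed.

Lemma pack1_index x b : x \in pack1 b -> b \in I.
Proof.
rewrite inE => /andP[_ /eqP Nx].
by have /setIP[] : b \in nbhd e x :&: I by rewrite Nx set11.
Qed.

Lemma pack1_inj x b c : x \in pack1 b -> x \in pack1 c -> b = c.
Proof.
move=> xb xc; have cI := pack1_index xc.
by apply/esym/eqP; rewrite -(pack1_adjE xb cI) (pack1_adjE xc cI).
Qed.

Lemma pack1_neq x y b c : x \in pack1 b -> y \in pack1 c -> b != c -> x != y.
Proof.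
move=> xb yc; apply: contraNneq => xy.
by rewrite (pack1_inj xb (c := c)) // xy.
Qed.

Lemma pack1_intro x b :
  x \notin I -> b \in I -> e x b -> (forall c, c \in I -> e x c -> c = b) ->
  x \in pack1 b.
Proof.
move=> xI bI xb uniq_b; rewrite inE in_setC xI; apply/eqP/setP => c.
rewrite !inE; case: (eqVneq c b) => [->|cb]; first by rewrite xb bI.
by apply/negbTE/andP => -[xc cI]; move/eqP: cb; rewrite (uniq_b c).
Qed.

Lemma T2_pack1 y : y \in T2 -> exists2 d, d \in I & y \in pack1 d.
Proof. by case/bigcupP => d dI; rewrite inE => /andP[yd _]; exists d. Qed.

Lemma T2rel_sym : symmetric T2rel.
Proof.
move=> x y; rewrite /T2rel e_sym andbCA; congr [&& _, _, _ & ~~ _].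
by apply: eq_existsb => d; rewrite [(x \in _) && _]andbC.
Qed.

Lemma claw_free_adj x y1 y2 y3 :
  e x y1 -> e x y2 -> e x y3 -> y1 != y2 -> y1 != y3 -> y2 != y3 ->
  ~~ e y1 y3 -> ~~ e y2 y3 -> e y1 y2.
Proof.
move=> x1 x2 x3 d12 d13 d23 n13 n23.
by have := e_cf x1 x2 x3 d12 d13 d23; rewrite (negbTE n13) (negbTE n23) !orbF.
Qed.

Lemma max_independent_dominating w : w \notin I -> exists2 b, b \in I & e w b.
Proof.
move=> wI; have [I_ind I_maxcard] := I_max.
apply/exists_inP; apply: contraT => /exists_inPn w_free.
suff ind_wI : independent e (w |: I).
  by have := I_maxcard _ ind_wI; rewrite cardsU1 wI add1n ltnn.
move=> x y; rewrite !inE => /orP[/eqP->|xI] /orP[/eqP->|yI].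
- by rewrite e_irr.
- exact: w_free.
- by rewrite e_sym; apply: w_free.
- exact: I_ind.
Qed.

Variable a : T.
Hypothesis aI : a \in I.

Definition ext_nbhd (p : T) : {set T} := nbhd e p :\: cnbhd e a.
Local Notation K := ext_nbhd.

Lemma in_ext_nbhd p w : (w \in K p) = [&& w != a, ~~ e a w & e p w].
Proof. by rewrite !inE negb_or andbA. Qed.

Lemma ext_nbhd_adj p w : w \in K p -> e p w.
Proof. by rewrite in_ext_nbhd => /and3P[]. Qed.

Lemma cnbhd_diff_pack1 v : v \in pack1 a -> cnbhd e v :\: cnbhd e a = K v.
Proof.
move=> va; apply/setP => z; rewrite !inE.
by case: (eqVneq z v) => [->|] //=; rewrite e_sym (pack1_adjE va aI) eqxx orbT.
Qed.

Lemma ext_nbhd_notin_pack1 p w : w \in K p -> w \notin pack1 a.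
Proof.
rewrite in_ext_nbhd => /and3P[_ naw _]; apply: contra naw => wa.
by rewrite e_sym (pack1_adjE wa aI).
Qed.

Lemma pack1_in_ext_nbhd p u b : u \in pack1 b -> b != a -> e p u -> u \in K p.
Proof.
move=> ub ba pu; rewrite in_ext_nbhd notin_in_neq ?(pack1_notin ub) //=.
by rewrite e_sym (pack1_adjE ub aI) eq_sym ba.
Qed.

Lemma ext_nbhd_pack1 p w :
  p \in pack1 a -> w \in K p -> exists2 b, b != a & w \in pack1 b.
Proof.
move=> pa; rewrite in_ext_nbhd => /and3P[wa naw pw].
have [I_ind _] := I_max.
have pI := pack1_notin pa.
have wI : w \notin I by apply: contraNN wa => wI; rewrite -(pack1_adjE pa wI).
have [b bI wb] := max_independent_dominating wI.
have ba : b != a by apply: contraNneq naw => <-; rewrite e_sym.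
exists b => //; apply: pack1_intro => // c cI wc.
apply/eqP; apply: contraT => cb.
have ca : c != a by apply: contraNneq naw => <-; rewrite e_sym.
have /negP[] := I_ind b c bI cI.
apply: (claw_free_adj (x := w) (y3 := p)) => //.
- by rewrite e_sym.
- by rewrite eq_sym.
- by rewrite eq_sym notin_in_neq.
- by rewrite eq_sym notin_in_neq.
- by rewrite e_sym (pack1_adjE pa bI).
- by rewrite e_sym (pack1_adjE pa cI).
Qed.

Lemma ext_nbhd_clique p w w' :
  p \in pack1 a -> w \in K p -> w' \in K p -> w != w' -> e w w'.
Proof.
move=> pa; rewrite !in_ext_nbhd => /and3P[wa naw pw] /and3P[w'a naw' pw'] ww'.
apply: (claw_free_adj (x := p) (y3 := a)) => //; try by rewrite e_sym.
by rewrite (pack1_adjE pa aI).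
Qed.

Lemma T2_ext_nbhd_avoid p b' :
  p \in pack1 a -> p \in T2 ->
  exists u c, [/\ u \in K p, u \in pack1 c & c != b'].
Proof.
move=> pa /bigcupP[a' _]; rewrite inE => /andP[pa'].
case/exists_inP => b _ /exists_inP[c _ /and5P[bc ba' ca' /exists_inP[ub ubb pub]
  /exists_inP[uc ucc puc]]].
move: ba' ca'; rewrite (pack1_inj pa' pa) => ba ca.
case: (eqVneq b b') => [<-|bb'].
- by exists uc, c; rewrite eq_sym bc (pack1_in_ext_nbhd ucc).
- by exists ub, b; rewrite bb' (pack1_in_ext_nbhd ubb).
Qed.

Lemma ext_nbhd_T2 p w : p \in pack1 a -> p \in T2 -> w \in K p -> w \in T2.
Proof.
move=> pa pT2 wK; have [b' b'a wb'] := ext_nbhd_pack1 pa wK.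
have [u [c [uK uc cb']]] := T2_ext_nbhd_avoid b' pa pT2.
have ca : c != a by apply: contraNneq (ext_nbhd_notin_pack1 uK) => <-.
apply/bigcupP; exists b'; first exact: pack1_index wb'.
rewrite inE wb'; apply/exists_inP; exists a => //.
apply/exists_inP; exists c; first exact: pack1_index uc.
have pw := ext_nbhd_adj wK.
have wu : e w u.
  apply: (ext_nbhd_clique pa) => //.
  by apply: (pack1_neq wb' uc); rewrite eq_sym.
rewrite eq_sym ca eq_sym b'a cb' /=.
by apply/andP; split; apply/exists_inP; [exists p; rewrite // e_sym | exists u].
Qed.

Lemma ext_nbhd_T2rel p w : p \in pack1 a -> p \in T2 -> w \in K p -> T2rel p w.
Proof.
move=> pa pT2 wK.
rewrite /T2rel pT2 (ext_nbhd_T2 pa pT2 wK) (ext_nbhd_adj wK) /=.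
apply/exists_inP => -[d _ /andP[pd wd]].
by move: (ext_nbhd_notin_pack1 wK); rewrite (pack1_inj pa pd) wd.
Qed.

Lemma T2rel_pack1_ext_nbhd z z' : z \in pack1 a -> T2rel z z' -> z' \in K z.
Proof.
move=> za /and4P[_ z'T2 zz' no_common_pack].
have [d _ z'd] := T2_pack1 z'T2.
apply: (pack1_in_ext_nbhd z'd) => //; apply: contraNneq no_common_pack => da.
by apply/exists_inP; exists a; rewrite // za -da.
Qed.

Lemma adj_ext_nbhd_other_pack p q w b w' d :
  p \in pack1 a -> q \in pack1 a -> w \in K p -> w \in pack1 b -> e q w ->
  w' \in K p -> w' \in pack1 d -> d != b -> e q w'.
Proof.
move=> pa qa wK wb qw w'K w'd db; have bI := pack1_index wb.
have ba : b != a by apply: contraNneq (ext_nbhd_notin_pack1 wK) => <-.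
apply: (claw_free_adj (x := w) (y3 := b)).
- by rewrite e_sym.
- apply: (ext_nbhd_clique pa) => //.
  by apply: (pack1_neq wb w'd); rewrite eq_sym.
- by rewrite (pack1_adjE wb bI).
- by apply: contraNneq (ext_nbhd_notin_pack1 w'K) => <-.
- exact: notin_in_neq (pack1_notin qa) bI.
- exact: notin_in_neq (pack1_notin w'd) bI.
- by rewrite (pack1_adjE qa bI).
- by rewrite (pack1_adjE w'd bI) eq_sym.
Qed.

Lemma ext_nbhd_subset p q w :
  p \in pack1 a -> p \in T2 -> q \in pack1 a -> w \in K p -> e q w ->
  K p \subset K q.
Proof.
move=> pa pT2 qa wK qw; have [b _ wb] := ext_nbhd_pack1 pa wK.
apply/subsetP => w' w'K; have [d da w'd] := ext_nbhd_pack1 pa w'K.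
apply: (pack1_in_ext_nbhd w'd da).
case: (eqVneq d b) => [dEb|db].
  2: exact: adj_ext_nbhd_other_pack wb qw w'K w'd db.
rewrite {}dEb in w'd.
have [u [c [uK uc cb]]] := T2_ext_nbhd_avoid b pa pT2.
have qu := adj_ext_nbhd_other_pack pa qa wK wb qw uK uc cb.
by apply: (adj_ext_nbhd_other_pack pa qa uK uc qu w'K w'd); rewrite eq_sym.
Qed.

Lemma T2rel_from_ext_nbhd v z z' :
  v \in pack1 a -> v \in T2 -> z \in K v -> T2rel z z' ->
  (z' \in pack1 a) && (K z' == K v) || (z' \in K v).
Proof.
move=> va vT2 zK /and4P[_ z'T2 zz' no_common_pack].
have [b ba zb] := ext_nbhd_pack1 va zK; have bI := pack1_index zb.
have [d _ z'd] := T2_pack1 z'T2.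
have db : d != b.
  apply: contraNneq no_common_pack => dEb.
  by apply/exists_inP; exists b; rewrite // zb -dEb.
have vz := ext_nbhd_adj zK.
case: (eqVneq d a) => [dEa|da].
  rewrite {}dEa in z'd; rewrite z'd eqEsubset /=.
  apply/orP; left; apply/andP; split.
  - apply: (ext_nbhd_subset z'd z'T2 va (w := z)) => //.
    by apply: (pack1_in_ext_nbhd zb ba); rewrite e_sym.
  - by apply: (ext_nbhd_subset va vT2 z'd zK); rewrite e_sym.
apply/orP; right; apply: (pack1_in_ext_nbhd z'd da).
apply: (claw_free_adj (x := z) (y3 := b)) => //.
- by rewrite e_sym.
- by rewrite (pack1_adjE zb bI).
- by apply: (pack1_neq va z'd); rewrite eq_sym.
- exact: notin_in_neq (pack1_notin va) bI.
- exact: notin_in_neq (pack1_notin z'd) bI.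
- by rewrite (pack1_adjE va bI).
- by rewrite (pack1_adjE z'd bI) eq_sym.
Qed.

Lemma T2rel_closed_ext_nbhd v :
  v \in pack1 a -> v \in T2 ->
  closed T2rel [pred z | (z \in pack1 a) && (K z == K v) || (z \in K v)].
Proof.
move=> va vT2; apply: (intro_closed (sym_connect_sym T2rel_sym)) => z z' zz'.
case/orP => [/andP[za /eqP <-]|zK].
- by rewrite inE (T2rel_pack1_ext_nbhd za zz') orbT.
- exact: T2rel_from_ext_nbhd zK zz'.
Qed.

Lemma cluster_diff_pack1 v C :
  v \in pack1 a -> cluster e I C -> v \in C -> C :\: pack1 a = K v.
Proof.
move=> va [x xT2 ->]; rewrite inE => /andP[vT2 xv].
apply/setP => w; apply/idP/idP => [|wK].
  rewrite in_setD inE => /and3P[wa wT2 xw].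
  have vw : connect T2rel v w.
    by apply: connect_trans xw; rewrite (sym_connect_sym T2rel_sym).
  have := closed_connect (T2rel_closed_ext_nbhd va vT2) vw.
  by rewrite inE /= va eqxx => /esym; rewrite inE /= (negbTE wa).
rewrite in_setD (ext_nbhd_notin_pack1 wK) inE (ext_nbhd_T2 va vT2 wK).
exact/(connect_trans xv)/connect1/ext_nbhd_T2rel.
Qed.

End Cluster.

Theorem corollary1 (T : finType) (e : rel T)
  (e_sym : symmetric e) (e_irr : irreflexive e)
  (Hcf : claw_free e) (I : {set T}) (HI : max_independent e I)
  (a : T) (Ha : a \in I) (v : T) (Hv : v \in pack1 e I a)
  (C : {set T}) (HC : cluster e I C) (HvC : v \in C) :
  cnbhd e v :\: cnbhd e a = C :\: pack1 e I a.
Proof.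
rewrite (cnbhd_diff_pack1 e_sym Ha Hv).
by rewrite (cluster_diff_pack1 e_sym e_irr Hcf HI Ha Hv HC HvC).
Qed.
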